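(* Let $1\leqslant k\leqslant n$, and let $P_{n,k}$ be the subgraph of $P_n$ induced by all permutations $\pi$ with $\pi_1\in\{1,\ldots,k\}$. Then: (a) the map $f_{n,k}$ from the vertices of $P_{n,k}$ to those of $P_k$, obtained by deleting from $\pi$ all entries not in $\{1,\ldots,k\}$, is a graph homomorphism $P_{n,k}\to P_k$; (b) $\chi(P_{n,k})=\chi(P_k)$.
   Context: For $n\geqslant 1$, the Pancake graph $P_n$ is the Cayley graph on the symmetric group $\mathrm{Sym}_n$, with permutations written in one-line notation $\pi=[\pi_1\pi_2\ldots\pi_n]$. Its generating set consists of the prefix-reversals $r_i$, $2\leqslant i\leqslant n$. Multiplying $\pi$ on the right by $r_i$ reverses the first $i$ entries: $\pi r_i=[\pi_i\pi_{i-1}\ldots\pi_1\pi_{i+1}\ldots\pi_n]$. Two vertices $\pi,\sigma$ are adjacent iff $\sigma=\pi r_i$ for some $2\leqslant i\leqslant n$. $\chi$ denotes the chromatic number. *)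

From mathcomp Require Import all_boot all_order all_fingroup.
Set Implicit Arguments. Unset Strict Implicit. Unset Printing Implicit Defensive.

(* One-line notation of s : 'S_n, with 1-based values: [s_1 ... s_n]. *)
Definition oneline (n : nat) (s : 'S_n) : seq nat := [seq (s j).+1 | j <- enum 'I_n].

Definition flip (i : nat) (w : seq nat) : seq nat := rev (take i w) ++ drop i w.

Definition pancake_adj (w u : seq nat) : bool :=
  [exists i : 'I_(size w).+1, (1 < i) && (u == flip i w)].

Definition pancake_rel (n : nat) : rel 'S_n :=
  fun s t => pancake_adj (oneline s) (oneline t).

Definition Pnk_vert (n k : nat) (s : 'S_n) : bool :=
  (0 < head 0 (oneline s) <= k).

Arguments Pnk_vert : clear implicits.
Definition Pnk_type (n k : nat) := {s : 'S_n | Pnk_vert n k s}.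

Definition Pnk_rel (n k : nat) : rel (Pnk_type n k) :=
  fun x y => pancake_rel (val x) (val y).

Definition fdel (k : nat) (w : seq nat) : seq nat := [seq x <- w | 0 < x <= k].

Definition colorable (T : finType) (e : rel T) (c : nat) : bool :=
  [exists f : {ffun T -> 'I_c}, [forall x, forall y, e x y ==> (f x != f y)]].

Definition chi (T : finType) (e : rel T) : nat :=
  find (colorable e) (iota 0 #|T|.+1).

(* Part (a): deleting the entries larger than k from the one-line word of a
   vertex of P_{n,k} yields a one-line word of Sym_k, and a prefix reversal
   r_i whose result still starts with an entry <= k becomes, after deletion,
   the prefix reversal r_j, where j is the number of entries <= k among the
   first i; j >= 2 because both the old and the new first entry count.

   Part (b): by (a) there is a homomorphism P_{n,k} -> P_k, and conversely
   appending k+1, ..., n to a one-line word of Sym_k embeds P_k into P_{n,k}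
   (prefix reversals r_i with i <= k ignore the appended tail).  Since the
   Pancake graphs are loopless, chromatic numbers are monotone along graph
   homomorphisms, whence the equality. *)
From mathcomp Require Import all_boot all_order all_fingroup.
Set Implicit Arguments. Unset Strict Implicit.

Lemma head_flip i (w : seq nat) :
  0 < i <= size w -> head 0 (flip i w) = nth 0 w i.-1.
Proof.
move=> /andP[i_gt0 i_le]; rewrite -nth0 /flip nth_cat size_rev size_takel //.
by rewrite i_gt0 nth_rev ?size_takel // nth_take ?subn1 // prednK.
Qed.

Lemma flip_cat i (a b : seq nat) : i <= size a -> flip i (a ++ b) = flip i a ++ b.
Proof.
move=> i_le; rewrite /flip takel_cat // drop_cat -catA.
by case: ltngtP i_le => // ->; rewrite subnn drop0 drop_size.
Qed.

(* Core of part (a), for any selection predicate p: if the first entries of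
   w and of flip i w are both selected, the filtered words are adjacent via
   the reversal of the prefix made of the selected entries among the first i. *)
Lemma pancake_adj_filter (p : pred nat) (w : seq nat) i :
  1 < i <= size w -> p (head 0 w) -> p (head 0 (flip i w)) ->
  pancake_adj (filter p w) (filter p (flip i w)).
Proof.
move=> /andP[i_gt1 i_le] p_head; rewrite head_flip ?(ltnW i_gt1) // => p_ith.
set j := count p (take i w).
(* The first and the i-th entries are two distinct selected entries. *)
have j_gt1 : 1 < j.
  case: w i_le p_head p_ith @j => [|a w] /=; first by move=> /(leq_trans i_gt1).
  case: i i_gt1 => [|[|i]] // _ i_le p_a p_ith /=.
  rewrite p_a add1n ltnS -has_count; apply/hasP; exists (nth 0 w i) => //.
  by rewrite -(nth_take 0 (ltnSn i)) mem_nth // size_takel.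
have j_le : j < (size (filter p w)).+1.
  by rewrite ltnS size_filter -(cat_take_drop i w) count_cat leq_addr.
apply/existsP; exists (Ordinal j_le); rewrite /= j_gt1; apply/eqP.
rewrite /flip filter_cat filter_rev -[in RHS](cat_take_drop i w) filter_cat.
by rewrite take_size_cat ?drop_size_cat ?size_filter.
Qed.

(* A word without repetitions is not adjacent to itself: r_i moves the i-th
   entry to the front, and it differs from the first one. *)
Lemma pancake_adj_irrefl (w : seq nat) : uniq w -> ~~ pancake_adj w w.
Proof.
move=> w_uniq; apply/existsP => -[i /andP[i_gt1 /eqP w_flip]].
have i_le : i <= size w by rewrite -ltnS.
have := head_flip (i:=i) (w:=w); rewrite -w_flip -nth0 (ltnW i_gt1) i_le.
move=> /(_ isT) /eqP; rewrite nth_uniq //.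
- by case: (nat_of_ord i) i_gt1 => [|[|]].
- by rewrite (leq_trans _ i_le) // (ltnW i_gt1).
- by rewrite (leq_trans _ i_le) // prednK // (ltnW i_gt1).
Qed.

Lemma oneline_uniq n (s : 'S_n) : uniq (oneline s).
Proof.
rewrite map_inj_uniq ?enum_uniq // => x y /eqP; rewrite eqSS => /eqP /val_inj.
exact: perm_inj.
Qed.

Lemma size_oneline n (s : 'S_n) : size (oneline s) = n.
Proof. by rewrite size_map size_enum_ord. Qed.

Lemma oneline_range n (s : 'S_n) : all (fun x => 0 < x <= n) (oneline s).
Proof. by apply/allP => x /mapP[j _ ->] /=. Qed.

Lemma oneline_surj n (w : seq nat) :
  uniq w -> size w = n -> all (fun x => 0 < x <= n) w ->
  exists s : 'S_n, oneline s = w.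
Proof.
move=> w_uniq w_size w_range.
have w_nth (j : 'I_n) : 0 < nth 0 w j <= n.
  by apply: (allP w_range); rewrite mem_nth // w_size.
pose f (j : 'I_n) : 'I_n := insubd j (nth 0 w j).-1.
have fE j : val (f j) = (nth 0 w j).-1.
  by rewrite insubdK // unfold_in /= prednK; case/andP: (w_nth j).
have fS j : (val (f j)).+1 = nth 0 w j by rewrite fE prednK; case/andP: (w_nth j).
have f_inj : injective f.
  move=> x y /(congr1 (fun j => (val j).+1)); rewrite !fS => /eqP.
  by rewrite nth_uniq ?w_size // => /eqP /val_inj.
exists (perm f_inj); rewrite /oneline (eq_map (g := nth 0 w \o val)).
  by rewrite map_comp val_enum_ord -{1}w_size; exact: mkseq_nth.
by move=> j; rewrite permE fS.
Qed.

Lemma count_oneline_le n k (s : 'S_n) :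
  k <= n -> count (fun x => 0 < x <= k) (oneline s) = k.
Proof.
move=> k_le.
have sub : {subset oneline s <= iota 1 n}.
  by move=> x /(allP (oneline_range s)) /andP[x_gt0 x_le]; rewrite mem_iota x_gt0 add1n ltnS.
have [_ eq_iota] := uniq_min_size (oneline_uniq s) sub
  (eq_leq (etrans (size_iota 1 n) (esym (size_oneline s)))).
rewrite (seq.permP (uniq_perm (oneline_uniq s) (iota_uniq 1 n) eq_iota)).
rewrite -(subnKC k_le) iotaD count_cat (@eq_in_count _ _ predT); last first.
  by move=> x; rewrite mem_iota add1n => /andP[-> /=]; rewrite ltnS.
rewrite count_predT size_iota (@eq_in_count _ _ pred0) ?count_pred0 ?addn0 //.
by move=> x; rewrite mem_iota add1n => /andP[/ltn_geF -> _]; rewrite andbF.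
Qed.

Lemma chi_le (T : finType) (e : rel T) c : colorable e c -> chi e <= c.
Proof.
move=> e_col; rewrite /chi; case: (ltnP c #|T|.+1) => [c_lt | c_ge].
  rewrite leqNgt; apply/negP => /(before_find 0).
  by rewrite nth_iota // add0n e_col.
by apply: leq_trans c_ge; rewrite -[X in _ <= X](size_iota 0) find_size.
Qed.

Lemma colorable_card (T : finType) (e : rel T) : irreflexive e -> colorable e #|T|.
Proof.
move=> e_irr; apply/existsP; exists [ffun x => enum_rank x].
apply/forallP => x; apply/forallP => y; apply/implyP => exy; rewrite !ffunE.
by apply: contraTneq exy => /enum_rank_inj ->; rewrite e_irr.
Qed.

Lemma colorable_chi (T : finType) (e : rel T) : irreflexive e -> colorable e (chi e).
Proof.
move=> /colorable_card e_col.
have has_col : has (colorable e) (iota 0 #|T|.+1).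
  by apply/hasP; exists #|T|; rewrite // mem_iota add0n leqnn.
have find_lt : find (colorable e) (iota 0 #|T|.+1) < #|T|.+1.
  by rewrite -[X in _ < X](size_iota 0) -has_find.
by have := nth_find 0 has_col; rewrite nth_iota // add0n.
Qed.

Lemma chi_hom (T1 T2 : finType) (e1 : rel T1) (e2 : rel T2) (R : T1 -> T2 -> bool) :
  irreflexive e2 -> (forall x, exists y, R x y) ->
  (forall x y x' y', R x x' -> R y y' -> e1 x y -> e2 x' y') ->
  chi e1 <= chi e2.
Proof.
move=> e2_irr R_total R_hom; pose h x := xchoose (R_total x).
have /existsP[f /forallP f_ok] := colorable_chi e2_irr.
apply: chi_le; apply/existsP; exists [ffun x => f (h x)].
apply/forallP => x; apply/forallP => y; apply/implyP => exy; rewrite !ffunE.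
apply: (implyP (forallP (f_ok (h x)) (h y))).
exact: R_hom (xchooseP (R_total x)) (xchooseP (R_total y)) exy.
Qed.

Lemma pancake_irrefl n : irreflexive (@pancake_rel n).
Proof. by move=> s; apply/negbTE/pancake_adj_irrefl/oneline_uniq. Qed.

Lemma fdel_oneline n k (s : 'S_n) :
  k <= n -> exists t : 'S_k, oneline t = fdel k (oneline s).
Proof.
move=> k_le; apply: oneline_surj.
- exact/filter_uniq/oneline_uniq.
- by rewrite size_filter count_oneline_le.
- by apply/allP => x; rewrite mem_filter => /andP[].
Qed.

Lemma fdel_adj n k (s t : 'S_n) : Pnk_vert n k s -> Pnk_vert n k t ->
  pancake_rel s t -> pancake_adj (fdel k (oneline s)) (fdel k (oneline t)).
Proof.
move=> s_vert t_vert /existsP[i /andP[i_gt1 /eqP t_flip]].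
rewrite /fdel t_flip; apply: pancake_adj_filter => //; last by rewrite -t_flip.
by rewrite i_gt1 -ltnS ltn_ord.
Qed.

Definition ext_word n k (t : 'S_k) : seq nat := oneline t ++ iota k.+1 (n - k).

Lemma ext_word_oneline n k (t : 'S_k) :
  k <= n -> exists s : 'S_n, oneline s = ext_word n t.
Proof.
move=> k_le; have t_range := allP (oneline_range t); apply: oneline_surj.
- rewrite cat_uniq oneline_uniq iota_uniq andbT /=; apply/hasP => -[x].
  rewrite mem_iota => /andP[k_lt _] /t_range /andP[_ x_le].
  by rewrite ltnNge x_le in k_lt.
- by rewrite size_cat size_oneline size_iota subnKC.
- rewrite all_cat; apply/andP; split; apply/allP => x.
    by move=> /t_range /andP[-> x_le]; apply: leq_trans x_le k_le.
  rewrite mem_iota => /andP[k_lt x_lt]; rewrite (leq_trans _ k_lt) //=.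
  by rewrite -ltnS -(subnKC k_le) -addSn.
Qed.

Lemma ext_word_vert n k (t : 'S_k) (s : 'S_n) :
  0 < k -> oneline s = ext_word n t -> Pnk_vert n k s.
Proof.
move=> k_gt0 s_ext; rewrite /Pnk_vert s_ext /ext_word.
have : oneline t != [::] by rewrite -size_eq0 size_oneline -lt0n.
case t_word: (oneline t) => [|a r] // _ /=.
by apply: (allP (oneline_range t)); rewrite t_word mem_head.
Qed.

Lemma ext_word_adj n k (t t' : 'S_k) :
  pancake_rel t t' -> pancake_adj (ext_word n t) (ext_word n t').
Proof.
move=> /existsP[i /andP[i_gt1 /eqP t'_flip]].
have i_le : i < (size (ext_word n t)).+1.
  by rewrite ltnS size_cat (leq_trans _ (leq_addr _ _)) // -ltnS.
apply/existsP; exists (Ordinal i_le); rewrite /= i_gt1 /ext_word t'_flip /= flip_cat // -ltnS; exact: ltn_ord.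
Qed.

Theorem mainTheorem3 (n k : nat) (hk : 1 <= k) (hkn : k <= n) :
  (forall s : 'S_n, Pnk_vert n k s -> exists t : 'S_k, oneline t = fdel k (oneline s)) /\
  (forall s t : 'S_n, Pnk_vert n k s -> Pnk_vert n k t -> pancake_rel s t ->
     pancake_adj (fdel k (oneline s)) (fdel k (oneline t))) /\
  chi (@Pnk_rel n k) = chi (@pancake_rel k).
Proof.
split; first by move=> s _; exact: fdel_oneline.
split; first exact: fdel_adj.
apply/eqP; rewrite eqn_leq; apply/andP; split.
- pose R (x : Pnk_type n k) (t : 'S_k) := oneline t == fdel k (oneline (val x)).
  apply: (@chi_hom _ _ _ _ R (@pancake_irrefl k)).
    by move=> x; have [t t_del] := fdel_oneline (val x) hkn; exists t; apply/eqP.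
  move=> x y x' y' /eqP x'_del /eqP y'_del; rewrite /pancake_rel x'_del y'_del.
  exact: fdel_adj (valP x) (valP y).
- pose R (t : 'S_k) (x : Pnk_type n k) := oneline (val x) == ext_word n t.
  apply: (@chi_hom _ _ _ _ R) => [x | t | t t' x y /eqP x_ext /eqP y_ext].
  + exact: pancake_irrefl.
  + have [s s_ext] := ext_word_oneline t hkn.
    by exists (exist _ s (ext_word_vert hk s_ext)); apply/eqP.
  + by rewrite /Pnk_rel /pancake_rel x_ext y_ext; apply: ext_word_adj.
Qed.
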